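(* Let $R$ be a commutative ring. If every countable direct sum of Gorenstein injective $R$-modules is Gorenstein injective, then $R$ is Noetherian.
   Context: A complex is acyclic if all its homology vanishes. An $R$-module $B$ is Gorenstein injective if there exists an acyclic complex $I^\bullet$ of injective $R$-modules with $\ker(I^0\to I^1)\cong B$ such that $\operatorname{Hom}_R(E,I^\bullet)$ is acyclic for every injective $R$-module $E$. *)

From HB Require Import structures.
From mathcomp Require Import all_boot all_order all_algebra.
Set Implicit Arguments. Unset Strict Implicit. Unset Printing Implicit Defensive.
Import Order.TTheory GRing.Theory Num.Theory.
Local Open Scope ring_scope.

Section Defs.
Variable R : comPzRingType.

Definition injective_module (E : lmodType R) : Prop :=
  forall (A B : lmodType R) (i : {linear A -> B}) (f : {linear A -> E}),
    injective i -> exists g : {linear B -> E}, forall a, g (i a) = f a.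

Definition is_complex (I : int -> lmodType R)
  (d : forall n : int, {linear I n -> I (n + 1)}) : Prop :=
  forall (n : int) (x : I n), d (n + 1) (d n x) = 0.

Definition acyclic_complex (I : int -> lmodType R)
  (d : forall n : int, {linear I n -> I (n + 1)}) : Prop :=
  is_complex d /\
  forall (n : int) (x : I (n + 1)), d (n + 1) x = 0 ->
    exists y : I n, d n y = x.

(* Hom_R(E, I^.) is acyclic (it is automatically a complex when I^. is):
   every f : E -> I^(n+1) with d o f = 0 factors as d o g. *)
Definition Hom_acyclic (E : lmodType R) (I : int -> lmodType R)
  (d : forall n : int, {linear I n -> I (n + 1)}) : Prop :=
  forall (n : int) (f : {linear E -> I (n + 1)}),
    (forall e, d (n + 1) (f e) = 0) ->
    exists g : {linear E -> I n}, forall e, d n (g e) = f e.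

Definition iso_to_ker0 (B : lmodType R) (I : int -> lmodType R)
  (d : forall n : int, {linear I n -> I (n + 1)}) : Prop :=
  exists phi : {linear B -> I 0},
    injective phi /\
    forall y : I 0, d 0 y = 0 <-> exists b : B, phi b = y.

Definition Gorenstein_injective (B : lmodType R) : Prop :=
  exists (I : int -> lmodType R) (d : forall n : int, {linear I n -> I (n + 1)}),
    (forall n, injective_module (I n)) /\
    acyclic_complex d /\
    iso_to_ker0 B d /\
    (forall E : lmodType R, injective_module E -> Hom_acyclic E d).

Definition is_direct_sum (M : nat -> lmodType R) (D : lmodType R)
  (iota : forall n, {linear M n -> D}) : Prop :=
  (forall x : D, exists (N : nat) (m : forall i, M i),
      x = \sum_(i < N) iota i (m i)) /\
  (forall (N : nat) (m : forall i, M i),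
      \sum_(i < N) iota i (m i) = 0 -> forall i : nat, (i < N)%N -> m i = 0).

Definition is_ideal (J : R -> Prop) : Prop :=
  J 0 /\ (forall x y, J x -> J y -> J (x + y)) /\ (forall r x, J x -> J (r * x)).

Definition noetherian_ring : Prop :=
  forall J : R -> Prop, is_ideal J ->
    exists s : seq R, forall x, J x <->
      exists c : seq R, size c = size s /\ x = \sum_(i < size s) c`_i * s`_i.

End Defs.

From HB Require Import structures.
From mathcomp Require Import all_boot all_order all_algebra all_field.
From mathcomp Require Import boolp classical_sets functions.
Set Implicit Arguments. Unset Strict Implicit. Unset Printing Implicit Defensive.
Import Order.TTheory GRing.Theory Num.Theory.
Local Open Scope ring_scope.
Local Open Scope classical_set_scope.

(* Suppose R is not Noetherian. Then it has elements x_0, x_1, ... with x_n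
   outside the ideal I_n = (x_0, ..., x_(n-1)) (not_noetherian_chain). The
   divisible group unitC of nonzero algebraic numbers, which has elements of
   every finite order, plays the role of Q/Z: Baer's extension theorem for
   divisible groups (divisible_extension, via Zorn's lemma) yields characters
   R -> unitC vanishing on I_n but not at x_n (separating_character), hence,
   by the Hom-tensor adjunction, linear maps e_n from R to the injective module
   E = Hom_Z(R, unitC) (coinduced_injective) killing I_n but not x_n.
   Injective modules are Gorenstein injective, so by hypothesis a countable
   direct sum of copies of E is Gorenstein injective, which the key lemma
   direct_sum_not_Gorenstein_injective refutes: the inclusions of the
   summands lift to degree -1 of a complete resolution, their telescoping sum
   over the union of the I_n extends to R, and evaluating at 1 produces an
   element of the direct sum that cannot have finite support. *)

Section Subgroups.
Variable B : zmodType.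

Definition is_subgroup (S : set B) : Prop :=
  S 0 /\ forall x y, S x -> S y -> S (x - y).

Variables (S : set B) (sgS : is_subgroup S).

Lemma subgroup0 : S 0. Proof. by case: sgS. Qed.

Lemma subgroupB x y : S x -> S y -> S (x - y). Proof. by case: sgS => _; apply. Qed.

Lemma subgroupN x : S x -> S (- x).
Proof. by move=> Sx; rewrite -sub0r; apply: subgroupB => //; apply: subgroup0. Qed.

Lemma subgroupD x y : S x -> S y -> S (x + y).
Proof. by move=> Sx /subgroupN Sy; rewrite -[y]opprK; apply: subgroupB. Qed.

Lemma subgroupMn x n : S x -> S (x *+ n).
Proof.
move=> Sx; elim: n => [|n IHn]; first by rewrite mulr0n; apply: subgroup0.
by rewrite mulrS; apply: subgroupD.
Qed.

Lemma subgroupMz x k : S x -> S (x *~ k).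
Proof.
move=> Sx; case: k => n; first by rewrite -pmulrn; apply: subgroupMn.
by rewrite NegzE mulrNz -pmulrn; apply/subgroupN/subgroupMn.
Qed.

Lemma subgroup_multiples b :
  exists m : nat, forall k : int, S (b *~ k) <-> (m %| k)%Z.
Proof.
have Sabs k : S (b *~ k) -> S (b *+ `|k|%N).
  case: k => n Sk //.
  by move: (subgroupN Sk); rewrite NegzE mulrNz opprK.
pose P : pred nat := fun n => `[< (0 < n)%N /\ S (b *+ n) >].
have [exP | noP] := pselect (exists n, P n).
- have [m /asboolP [m0 Sm] m_min] := ex_minnP exP; exists m => k.
  split=> [Sk | /dvdzP [j ->]]; last first.
    by rewrite mulrC mulrzA -pmulrn; apply: subgroupMz.
  have mz : m%:Z != 0 by rewrite eqz_nat -lt0n.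
  apply/dvdz_mod0P; set r := (k %% m)%Z.
  have Sr : S (b *~ r).
    have := subgroupB Sk (subgroupMz (k %/ m)%Z Sm).
    rewrite pmulrn -mulrzA [_ * (k %/ m)%Z]mulrC {1}(divz_eq k m) mulrzDr.
    by rewrite addrAC subrr add0r.
  have r_ge0 : 0 <= r by apply: modz_ge0.
  have r_lt : r < m by apply: ltz_pmod; rewrite ltz_nat.
  apply: contraTeq r_lt => r_neq0; rewrite -leNgt -(gez0_abs r_ge0) lez_nat.
  by apply: m_min; apply/asboolP; rewrite absz_gt0 r_neq0; split=> //; apply: Sabs.
- exists 0%N => k; rewrite dvd0z; split=> [Sk | /eqP ->]; last first.
    by rewrite mulr0z; apply: subgroup0.
  apply: contra_notT noP => k_neq0; exists `|k|%N; apply/asboolP.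
  by rewrite absz_gt0 k_neq0; split=> //; apply: Sabs.
Qed.
End Subgroups.

Lemma pair_mulrz (B V : zmodType) (x : B) (u : V) (k : int) :
  (x, u) *~ k = (x *~ k, u *~ k).
Proof.
have pair_mulrn n : (x, u) *+ n = (x *+ n, u *+ n).
  by elim: n => // n IHn; rewrite !mulrS IHn.
by case: k => n; rewrite ?NegzE ?mulrNz -?pmulrn pair_mulrn.
Qed.

Section PartialHomomorphisms.
Variables (B V : zmodType).

(* The graph of an additive map defined on some subgroup of B. *)
Definition partial_hom (G : set (B * V)) : Prop :=
  is_subgroup G /\ forall x u v, G (x, u) -> G (x, v) -> u = v.

Definition domain (G : set (B * V)) : set B := [set x | exists u, G (x, u)].

Lemma domain_subgroup G : partial_hom G -> is_subgroup (domain G).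
Proof.
case=> sgG _; split; first by exists 0; exact: subgroup0 sgG.
by move=> x y [u Gxu] [v Gyv]; exists (u - v); exact: (subgroupB sgG Gxu Gyv).
Qed.

Definition adjoin (G : set (B * V)) (b : B) (q : V) : set (B * V) :=
  [set p | exists2 g, G g & exists k : int, p = g + (b, q) *~ k].

Definition compatible (G : set (B * V)) (b : B) (q : V) : Prop :=
  forall (k : int) v, G (b *~ k, v) -> v = q *~ k.

Lemma adjoin_sub G b q : G `<=` adjoin G b q.
Proof. by move=> p Gp; exists p => //; exists 0; rewrite mulr0z addr0. Qed.

Lemma adjoin_pair G b q : is_subgroup G -> adjoin G b q (b, q).
Proof.
by move=> sgG; exists 0; [apply: subgroup0 | exists 1; rewrite mulr1z add0r].
Qed.

Lemma adjoin_partial_hom G b q :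
  partial_hom G -> compatible G b q -> partial_hom (adjoin G b q).
Proof.
move=> [sgG funG] cGbq; split.
  split; first exact: adjoin_sub (subgroup0 sgG).
  move=> _ _ [g Gg [k ->]] [h Gh [l ->]]; exists (g - h); first exact: subgroupB.
  by exists (k - l); rewrite mulrzBr opprD addrACA.
move=> x u v [[y w] Gyw [k eu]] [[y' w'] Gyw' [l ev]].
move: eu ev; rewrite !pair_mulrz => -[-> ->] [ey ->].
have yE : y = y' + b *~ (l - k) by rewrite mulrzBr addrA -ey addrK.
have Gdiff : G (b *~ (l - k), w - w').
  have : G (y - y', w - w') := subgroupB sgG Gyw Gyw'.
  by rewrite yE [y' + _]addrC addrK.
by rewrite -(subrK w' w) (cGbq _ _ Gdiff) addrAC -mulrzDr subrK addrC.
Qed.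

Definition divisible (W : zmodType) : Prop :=
  forall (m : nat) (w : W), (0 < m)%N -> exists q : W, q *+ m = w.

Lemma compatible_exists G b :
  divisible V -> partial_hom G -> exists q, compatible G b q.
Proof.
move=> divV phG; have [sgG funG] := phG.
have [m mP] := subgroup_multiples (domain_subgroup phG) b.
have [m0 | m_gt0] := posnP m.
  exists 0 => k v Gkv; have: (m %| k)%Z by apply/mP; exists v.
  rewrite m0 dvd0z => /eqP k0; move: Gkv; rewrite k0 !mulr0z => G0v.
  exact: funG G0v (subgroup0 sgG).
have [w Gmw] : domain G (b *~ m) by apply/mP; rewrite dvdzz.
have [q qm] := divV m w m_gt0; exists q => k v Gkv.
have /dvdzP [j kE] : (m %| k)%Z by apply/mP; exists v.
apply: funG Gkv _; have := subgroupMz sgG j Gmw.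
by rewrite pair_mulrz kE -qm pmulrn [j * _]mulrC !mulrzA.
Qed.

(* The chain condition for Zorn's lemma: the union of a chain of partial
   homomorphisms extending G0 is again one. *)
Lemma chain_union_partial_hom G0 (C : set (set (B * V))) :
  partial_hom G0 -> total_on C subset ->
  (forall X, C X -> partial_hom (G0 `|` X)) ->
  partial_hom (G0 `|` \bigcup_(X in C) X).
Proof.
move=> phG0 totC phC; set U := _ `|` _.
have common p1 p2 : U p1 -> U p2 ->
    exists Z, [/\ partial_hom Z, Z p1, Z p2 & Z `<=` U].
  have inU X : C X -> G0 `|` X `<=` U.
    by move=> CX p [G0p | Xp]; [left | right; exists X].
  move=> [G0p1 | [X CX Xp1]] [G0p2 | [Y CY Yp2]].
  - by exists G0; split=> // p G0p; left.
  - by exists (G0 `|` Y); split; [exact: phC | left | right | exact: inU].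
  - by exists (G0 `|` X); split; [exact: phC | right | left | exact: inU].
  - have [XY | YX] := totC X Y CX CY.
      by exists (G0 `|` Y); split; [exact: phC | right; apply: XY | right | exact: inU].
    by exists (G0 `|` X); split; [exact: phC | right | right; apply: YX | exact: inU].
split; first split.
- by left; case: phG0 => -[].
- move=> p1 p2 Up1 Up2; have [Z [[sgZ _] Zp1 Zp2 ZU]] := common _ _ Up1 Up2.
  exact/ZU/(subgroupB sgZ).
- move=> x u v Uxu Uxv; have [Z [[_ funZ] Zxu Zxv _]] := common _ _ Uxu Uxv.
  exact: funZ Zxu Zxv.
Qed.

Theorem divisible_extension (G0 : set (B * V)) :
  divisible V -> partial_hom G0 ->
  exists F : B -> V, {morph F : x y / x + y} /\ forall x u, G0 (x, u) -> F x = u.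
Proof.
move=> divV phG0.
have [A [phA Amax]] := @Zorn_bigcup _ [set X | partial_hom (G0 `|` X)]
  (fun C CP totC => chain_union_partial_hom phG0 totC CP).
set M := G0 `|` A in phA; have [sgM funM] := phA.
have total x : domain M x.
  apply: contrapT => Mx; have [q cMq] := compatible_exists x divV phA.
  have phM' := adjoin_partial_hom phA cMq.
  apply: (Amax (adjoin M x q)); last first.
    by rewrite /= setUidr // => p G0p; apply/adjoin_sub; left.
  split=> [p Ap | sub]; first by apply/adjoin_sub; right.
  by apply: Mx; exists q; right; apply/sub/adjoin_pair.
pose F x := sval (cid (total x)).
have FP x : M (x, F x) := svalP (cid (total x)).
exists F; split=> [x y | x u G0xu]; last by apply: funM (FP x) _; left.
exact: funM (FP _) (subgroupD sgM (FP x) (FP y)).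
Qed.

Lemma separating_character (S : set B) b :
  divisible V -> (forall m, (1 < m)%N -> exists2 q : V, q != 0 & q *+ m = 0) ->
  is_subgroup S -> ~ S b ->
  exists chi : B -> V,
    [/\ {morph chi : x y / x + y}, forall x, S x -> chi x = 0 & chi b != 0].
Proof.
move=> divV torsV sgS Sb.
pose G := [set p : B * V | S p.1 /\ p.2 = 0].
have phG : partial_hom G.
  split=> [|x u v [_ /= ->] [_ /= ->]] //; split.
    by split=> //; apply: subgroup0.
  move=> [x u] [y v] [/= Sx ->] [/= Sy ->].
  by split; [exact: (subgroupB sgS Sx Sy) | exact: subrr].
have [m mP] := subgroup_multiples sgS b.
have m_neq1 : m != 1%N.
  by apply: contra_notN Sb => /eqP m1; rewrite -[b]mulr1z; apply/mP; rewrite m1 dvd1z.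
have m'_gt1 : (1 < if m == 0 then 2 else m)%N.
  by case: eqP => [//|/eqP m_neq0]; rewrite ltn_neqAle eq_sym m_neq1 lt0n.
have [q q_neq0 qm] := torsV _ m'_gt1.
have cGq : compatible G b q.
  move=> k v [/= /mP mk ->]; move: qm; case: eqP mk => [-> | _] mk qm.
    by move: mk; rewrite dvd0z => /eqP ->; rewrite mulr0z.
  by case/dvdzP: mk => j ->; rewrite mulrC mulrzA -pmulrn qm mul0rz.
have [chi [chiD chiP]] := divisible_extension divV (adjoin_partial_hom phG cGq).
exists chi; split=> // [x Sx | ]; first by apply: chiP; apply: adjoin_sub.
by rewrite (chiP _ _ (adjoin_pair _ _ (proj1 phG))).
Qed.
End PartialHomomorphisms.

(* The multiplicative group of nonzero algebraic numbers, written additively: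
   a divisible abelian group with elements of every finite order (it plays
   the role of Q/Z). *)
Definition unitC : Type := {z : algC | z != 0}.
HB.instance Definition _ := [isSub of unitC for @sval _ _].
HB.instance Definition _ := [Choice of unitC by <:].

Definition unitC_of (z : algC) (z_neq0 : z != 0) : unitC := exist _ z z_neq0.
Definition unitC1 : unitC := unitC_of (oner_neq0 algC).
Definition unitC_mul (a b : unitC) : unitC := unitC_of (mulf_neq0 (valP a) (valP b)).
Definition unitC_inv (a : unitC) : unitC := unitC_of (invr_neq0 (valP a)).

Lemma unitC_mulA : associative unitC_mul.
Proof. by move=> a b c; apply: val_inj; rewrite /= mulrA. Qed.
Lemma unitC_mulC : commutative unitC_mul.
Proof. by move=> a b; apply: val_inj; rewrite /= mulrC. Qed.
Lemma unitC_mul1 : left_id unitC1 unitC_mul.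
Proof. by move=> a; apply: val_inj; rewrite /= mul1r. Qed.
Lemma unitC_mulV : left_inverse unitC1 unitC_inv unitC_mul.
Proof. by move=> a; apply: val_inj; rewrite /= mulVf // (valP a). Qed.
HB.instance Definition _ :=
  GRing.isZmodule.Build unitC unitC_mulA unitC_mulC unitC_mul1 unitC_mulV.

Lemma val_unitC_muln (a : unitC) (n : nat) : val (a *+ n) = val a ^+ n.
Proof. by elim: n => [|n IHn]; rewrite ?mulr0n ?expr0 // mulrS exprS -IHn. Qed.

Lemma unitC_divisible : divisible unitC.
Proof.
move=> m v m_gt0; have root_neq0 : m.-root (val v) != 0.
  by rewrite rootC_eq0 // (valP v).
by exists (unitC_of root_neq0); apply: val_inj; rewrite val_unitC_muln rootCK.
Qed.

(* Primitive m-th roots of unity are nonzero elements of order m. *)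
Lemma unitC_torsion m : (1 < m)%N -> exists2 q : unitC, q != 0 & q *+ m = 0.
Proof.
move=> m_gt1; have m_gt0 : (0 < m)%N by apply: ltnW.
have [z z_prim] := C_prim_root_exists m_gt0.
have z_neq0 : z != 0.
  apply/eqP => z0; move: (prim_expr_order z_prim).
  by rewrite z0 expr0n eqn0Ngt m_gt0 => /eqP; rewrite eq_sym oner_eq0.
exists (unitC_of z_neq0).
  apply: contraTneq m_gt1 => /(congr1 val) /= z1.
  by move: (prim_order_dvd z_prim 1); rewrite expr1 z1 eqxx dvdn1 => /eqP ->.
by apply: val_inj; rewrite val_unitC_muln /= (prim_expr_order z_prim).
Qed.

Section Modules.
Variable R : comPzRingType.

Definition linear_map (U W : lmodType R) (f : U -> W) (f_lin : linear f) :
  {linear U -> W} := HB.pack f (GRing.isLinear.Build R U W *:%R f f_lin).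

Lemma linear_mapE (U W : lmodType R) (f : U -> W) (f_lin : linear f) x :
  linear_map f_lin x = f x.
Proof. by []. Qed.

Record submodule_pred (W : lmodType R) := SubmodulePred {
  smem :> W -> Prop;
  smem0 : smem 0;
  smemB : forall x y, smem x -> smem y -> smem (x - y);
  smemZ : forall r x, smem x -> smem (r *: x) }.

Section Submodule.
Variables (W : lmodType R) (S : submodule_pred W).

Definition submod_mem : {pred W} := fun x => `[< S x >].

Lemma submod_memP x : reflect (S x) (x \in submod_mem).
Proof. exact: asboolP. Qed.

Lemma submod_mem_closed : submod_closed submod_mem.
Proof.
split=> [|r x y /submod_memP Sx /submod_memP Sy]; apply/submod_memP.
  exact: smem0.
rewrite -[y]opprK; apply: smemB; first exact: smemZ.
by rewrite -sub0r; apply: smemB => //; apply: smem0.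
Qed.
HB.instance Definition _ :=
  GRing.isSubmodClosed.Build R W submod_mem submod_mem_closed.

Definition submodule : Type := {x : W | x \in submod_mem}.
HB.instance Definition _ := [isSub of submodule for @sval _ _].
HB.instance Definition _ := [Choice of submodule by <:].
HB.instance Definition _ := [SubChoice_isSubLmodule of submodule by <:].

Definition submod_of (x : W) (Sx : S x) : submodule :=
  exist _ x (introT (submod_memP x) Sx).

Definition submod_incl : {linear submodule -> W} := val.

Lemma submod_incl_inj : injective submod_incl. Proof. exact: val_inj. Qed.
End Submodule.

(* The coinduced module Hom_Z(R, V) of additive maps R -> V, with
   (r *: f) s = f (s * r); it is injective whenever V is divisible. *)
Section Coinduced.
Variable V : zmodType.

Definition additive_pred : {pred R -> V} := fun f => `[< {morph f : x y / x + y} >].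

Lemma additive_predP f : reflect {morph f : x y / x + y} (f \in additive_pred).
Proof. exact: asboolP. Qed.

Lemma additive_pred_closed : zmod_closed additive_pred.
Proof.
split=> [|f g /additive_predP fD /additive_predP gD]; apply/additive_predP.
  by move=> x y; rewrite addr0.
move=> x y; change (f (x + y) - g (x + y) = (f x - g x) + (f y - g y)).
by rewrite fD gD opprD addrACA.
Qed.
HB.instance Definition _ := GRing.isZmodClosed.Build (R -> V) additive_pred
  additive_pred_closed.

Definition coinduced : Type := {f : R -> V | f \in additive_pred}.
HB.instance Definition _ := [isSub of coinduced for @sval _ _].
HB.instance Definition _ := [Choice of coinduced by <:].
HB.instance Definition _ := [SubChoice_isSubZmodule of coinduced by <:].

Lemma coinducedD (f : coinduced) : {morph val f : x y / x + y}.
Proof. exact/additive_predP/valP. Qed.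

Lemma coinduced_eq (f g : coinduced) : (forall s, val f s = val g s) -> f = g.
Proof. by move=> fg; apply/val_inj/funext. Qed.

Definition coinduced_of (f : R -> V) (fD : {morph f : x y / x + y}) : coinduced :=
  exist _ f (introT (additive_predP f) fD).

Lemma coinduced_scale_subproof (r : R) (f : coinduced) :
  {morph (fun s => val f (s * r)) : x y / x + y}.
Proof. by move=> x y; rewrite mulrDl coinducedD. Qed.

Definition coinduced_scale (r : R) (f : coinduced) : coinduced :=
  coinduced_of (coinduced_scale_subproof r f).

Lemma coinduced_scaleA a b f :
  coinduced_scale a (coinduced_scale b f) = coinduced_scale (a * b) f.
Proof. by apply: coinduced_eq => s /=; rewrite mulrA. Qed.
Lemma coinduced_scale1 : left_id 1 coinduced_scale.
Proof. by move=> f; apply: coinduced_eq => s /=; rewrite mulr1. Qed.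
Lemma coinduced_scaleDr : right_distributive coinduced_scale +%R.
Proof. by move=> r f g; apply: coinduced_eq. Qed.
Lemma coinduced_scaleDl f : {morph coinduced_scale^~ f : a b / a + b}.
Proof. by move=> a b; apply: coinduced_eq => s /=; rewrite mulrDr coinducedD. Qed.
HB.instance Definition _ := GRing.Zmodule_isLmodule.Build R coinduced
  coinduced_scaleA coinduced_scale1 coinduced_scaleDr coinduced_scaleDl.

(* The Hom-tensor adjunction: an additive map chi : M -> V corresponds to
   the R-linear map m |-> (s |-> chi (s *: m)) from M to the coinduced module. *)
Section Adjunct.
Variables (M : lmodType R) (chi : M -> V) (chiD : {morph chi : x y / x + y}).

Lemma adjunct_subproof (m : M) : {morph (fun s => chi (s *: m)) : x y / x + y}.
Proof. by move=> x y; rewrite scalerDl chiD. Qed.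

Definition adjunct_fun (m : M) : coinduced := coinduced_of (adjunct_subproof m).

Lemma adjunct_linear : linear adjunct_fun.
Proof. by move=> r m n; apply: coinduced_eq => s /=; rewrite scalerDr chiD scalerA. Qed.

Definition adjunct : {linear M -> coinduced} := linear_map adjunct_linear.

Lemma adjunctE m s : val (adjunct m) s = chi (s *: m). Proof. by []. Qed.
End Adjunct.

(* Extend the additive map i a |-> f a evaluated at 1 from the image of i to
   all of B (divisible_extension), then take its adjunct. *)
Theorem coinduced_injective : divisible V -> injective_module coinduced.
Proof.
move=> divV A B i f i_inj.
pose G0 := [set p : B * V | exists a, p = (i a, val (f a) 1)].
have phG0 : partial_hom G0.
  split; first split.
  - by exists 0; rewrite !linear0.
  - move=> _ _ [a ->] [b ->]; exists (a - b).
    by rewrite !linearB; congr (_, _); rewrite /= -[LHS]/(val (f a - f b) 1) -linearB.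
  - by move=> x u v [a [-> ->]] [b [/i_inj -> ->]].
have [F [FD FG0]] := divisible_extension divV phG0.
exists (adjunct FD) => a; apply: coinduced_eq => s.
rewrite adjunctE -linearZ (FG0 _ (val (f (s *: a)) 1)); last by exists (s *: a).
by rewrite linearZ /= mul1r.
Qed.
End Coinduced.

Lemma prod_injective (E1 E2 : lmodType R) :
  injective_module E1 -> injective_module E2 -> injective_module (E1 * E2)%type.
Proof.
move=> inj1 inj2 A B i f i_inj.
have f1_lin : linear (fun a => (f a).1) by move=> r x y; rewrite linearP.
have f2_lin : linear (fun a => (f a).2) by move=> r x y; rewrite linearP.
have [g1 g1P] := inj1 A B i (linear_map f1_lin) i_inj.
have [g2 g2P] := inj2 A B i (linear_map f2_lin) i_inj.
have g_lin : linear (fun b => (g1 b, g2 b)) by move=> r x y; rewrite !linearP.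
exists (linear_map g_lin) => a.
by rewrite linear_mapE g1P g2P !linear_mapE; case: (f a).
Qed.

(* An injective module E is Gorenstein injective, via the complete
   resolution ... -> E*E -> E*E -> ... with differential (x, y) |-> (0, x). *)
Lemma injective_Gorenstein_injective (E : lmodType R) :
  injective_module E -> Gorenstein_injective E.
Proof.
move=> injE.
have shift_lin : linear (fun p : E * E => (0 : E, p.1)).
  by move=> r p q; congr (_, _); rewrite /= scaler0 addr0.
have incl_lin : linear (fun e : E => (0 : E, e)).
  by move=> r x y; congr (_, _); rewrite /= scaler0 addr0.
exists (fun=> (E * E)%type), (fun=> linear_map shift_lin).
split; [by move=> n; apply: prod_injective | split; [split | split]].
- by [].
- by move=> n [x y]; rewrite linear_mapE => /(congr1 snd) /= ->; exists (y, 0).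
- exists (linear_map incl_lin); split=> [x y | [y1 y2]]; rewrite !linear_mapE.
    by case.
  split=> [/(congr1 snd) /= -> | [e]]; first by exists y2.
  by rewrite linear_mapE => -[<-].
- move=> E' _ n f fP.
  have g_lin : linear (fun e => ((f e).2, 0 : E)).
    by move=> r x y; rewrite linearP; congr (_, _); rewrite /= scaler0 addr0.
  exists (linear_map g_lin) => e; move: (fP e); rewrite !linear_mapE.
  by case: (f e) => a b /(congr1 snd) /= ->.
Qed.

(* The direct sum of countably many copies of M: the finitely supported
   sequences in M, a submodule of the product module nat -> M. *)
Section DirectSum.
Variable M : lmodType R.

Definition finitely_supported (h : nat -> M) : Prop :=
  exists N, forall n, (N <= n)%N -> h n = 0.

Lemma finsupp0 : finitely_supported 0. Proof. by exists 0%N. Qed.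

Lemma finsuppB g h :
  finitely_supported g -> finitely_supported h -> finitely_supported (g - h).
Proof.
move=> [N gN] [N' hN']; exists (maxn N N') => n; rewrite geq_max => /andP[nN nN'].
by rewrite -[(g - h) n]/(g n - h n) gN // hN' // subr0.
Qed.

Lemma finsuppZ r h : finitely_supported h -> finitely_supported (r *: h).
Proof.
by move=> [N hN]; exists N => n nN; rewrite -[(r *: h) n]/(r *: h n) hN // scaler0.
Qed.

Definition finsupp_pred : submodule_pred (nat -> M) :=
  SubmodulePred finsupp0 finsuppB finsuppZ.

Definition direct_sum : lmodType R := submodule finsupp_pred.

Lemma unit_seq_finsupp n (m : M) : finsupp_pred (fun k => if k == n then m else 0).
Proof.
by exists n.+1 => k; case: eqP => // ->; rewrite ltnn.
Qed.

Definition unit_seq n (m : M) : direct_sum := submod_of (unit_seq_finsupp n m).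

Lemma unit_seq_linear n : linear (unit_seq n).
Proof.
move=> r x y; apply/val_inj/funext => k; rewrite linearP.
rewrite -[(_ + _) k]/(_ k + _ k) -[(r *: _) k]/(r *: _ k) /=.
by case: eqP; rewrite ?scaler0 ?addr0.
Qed.

Definition inj_seq n : {linear M -> direct_sum} := linear_map (unit_seq_linear n).

Lemma sum_inj_seqE N (m : nat -> M) k :
  val (\sum_(i < N) inj_seq i (m i)) k = if (k < N)%N then m k else 0.
Proof.
elim: N => [|N IHN]; first by rewrite big_ord0.
rewrite big_ord_recr -[val (_ + _) k]/(_ k + _ k) IHN linear_mapE /=.
rewrite [(k < N.+1)%N]ltnS [(k <= N)%N]leq_eqVlt.
by case: eqVneq => [->|_]; rewrite /= ?ltnn ?add0r ?addr0.
Qed.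

Lemma direct_sumP : is_direct_sum (M := fun=> M) inj_seq.
Proof.
split=> [h | N m h0 i iN]; last first.
  by move: (congr1 (fun h => val h i) h0); rewrite sum_inj_seqE iN.
have /submod_memP [N hN] := valP h.
exists N, (val h); apply/val_inj/funext => k; rewrite sum_inj_seqE.
by case: ltnP => // /hN.
Qed.
End DirectSum.
End Modules.

Section IdealChains.
Variable R : comPzRingType.

Definition seq_span (s : seq R) (y : R) : Prop :=
  exists c : seq R, size c = size s /\ y = \sum_(i < size s) c`_i * s`_i.

Lemma seq_span_sub (J : R -> Prop) s y :
  is_ideal J -> (forall z, z \in s -> J z) -> seq_span s y -> J y.
Proof.
move=> [J0 [JD JM]] sJ [c [_ ->]]; elim/big_ind: _ => // i _.
by apply/JM/sJ/mem_nth.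
Qed.

Lemma not_noetherian_ideal : ~ noetherian_ring R ->
  exists2 J : R -> Prop, is_ideal J & forall s, ~ (forall y, J y <-> seq_span s y).
Proof.
move=> notN; apply: contrapT => noJ; apply: notN => J idJ.
apply: contrapT => noS; apply: noJ; exists J => // s sP.
by apply: noS; exists s.
Qed.

Definition first_ideal (x : nat -> R) (n : nat) (y : R) : Prop :=
  exists c : nat -> R, y = \sum_(i < n) c i * x i.

Section FirstIdeal.
Variable x : nat -> R.

Lemma first_ideal0 n : first_ideal x n 0.
Proof. by exists (fun=> 0); rewrite big1 // => i _; rewrite mul0r. Qed.

Lemma first_idealB n y z :
  first_ideal x n y -> first_ideal x n z -> first_ideal x n (y - z).
Proof.
move=> [c ->] [c' ->]; exists (fun i => c i - c' i); rewrite -sumrB.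
by apply: eq_bigr => i _; rewrite mulrBl.
Qed.

Lemma first_idealM n r y : first_ideal x n y -> first_ideal x n (r * y).
Proof.
move=> [c ->]; exists (fun i => r * c i); rewrite mulr_sumr.
by apply: eq_bigr => i _; rewrite mulrA.
Qed.

Lemma first_ideal_mono m n y : (m <= n)%N -> first_ideal x m y -> first_ideal x n y.
Proof.
move=> mn [c ->]; exists (fun i => if (i < m)%N then c i else 0).
rewrite (big_ord_widen n (fun i => c i * x i) mn) big_mkcond.
by apply: eq_bigr => i _; case: ifP; rewrite ?mul0r.
Qed.

Lemma first_ideal_last n : first_ideal x n.+1 (x n).
Proof.
exists (fun i => (i == n)%:R); rewrite big_ord_recr /= eqxx mul1r big1 ?add0r //.
by move=> i _; rewrite ltn_eqF // mul0r.
Qed.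

Lemma seq_span_mkseq n y : seq_span (mkseq x n) y <-> first_ideal x n y.
Proof.
rewrite /seq_span size_mkseq; split=> [[c [_ ->]] | [c ->]].
  by exists (nth 0 c); apply: eq_bigr => i _; rewrite nth_mkseq.
exists (mkseq c n); rewrite size_mkseq; split=> //.
by apply: eq_bigr => i _; rewrite !nth_mkseq.
Qed.
End FirstIdeal.

Lemma seq_dependent_choice (T : Type) (P : seq T -> T -> Prop) :
  (forall s, exists y, P s y) -> exists x : nat -> T, forall n, P (mkseq x n) (x n).
Proof.
move=> /choice [f fP].
pose fix prefix n := if n is n'.+1 then rcons (prefix n') (f (prefix n')) else [::].
exists (fun n => f (prefix n)) => n.
suff -> : mkseq (fun n => f (prefix n)) n = prefix n by [].
by elim: n => //= n IHn; rewrite mkseqS IHn.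
Qed.

Lemma not_noetherian_chain : ~ noetherian_ring R ->
  exists x : nat -> R, forall n, ~ first_ideal x n (x n).
Proof.
move=> /not_noetherian_ideal [J idJ notfg].
pose P s y := (forall z, z \in s -> J z) -> J y /\ ~ seq_span s y.
have [x xP] : exists x : nat -> R, forall n, P (mkseq x n) (x n).
  apply: seq_dependent_choice => s; apply: contrapT => noy.
  have sJ : forall z, z \in s -> J z.
    by apply: contrapT => nsJ; apply: noy; exists 0 => /nsJ.
  apply: (notfg s) => y; split=> [Jy | ]; last exact: seq_span_sub.
  by apply: contrapT => spy; apply: noy; exists y.
have prefixJ n : (forall i, (i < n)%N -> J (x i)) -> forall z, z \in mkseq x n -> J z.
  by move=> xJ z /mapP [k]; rewrite mem_iota => /andP [_ /xJ Jxk] ->.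
have xJ n : forall i, (i < n)%N -> J (x i).
  elim: n => // n IHn i; rewrite ltnS leq_eqVlt => /predU1P [-> | /IHn //].
  by case: (xP n (prefixJ n IHn)).
exists x => n /seq_span_mkseq; case: (xP n (prefixJ n (xJ n))) => _; exact.
Qed.
End IdealChains.

Section KeyLemma.
Variable R : comPzRingType.

Lemma direct_sum_coord (E D : lmodType R) (iota : forall n, {linear E -> D}) N
    (a b : nat -> E) :
  is_direct_sum (M := fun=> E) iota ->
  \sum_(i < N) iota i (a i) = \sum_(i < N) iota i (b i) ->
  forall i, (i < N)%N -> a i = b i.
Proof.
move=> [_ uniq] eq_ab i iN; apply/eqP; rewrite -subr_eq0; apply/eqP.
apply: (uniq N (fun i => a i - b i)) => //.
by rewrite (eq_bigr _ (fun i _ => linearB _ _ _)) sumrB eq_ab subrr.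
Qed.

Section GorensteinLift.
Variables (D : lmodType R) (I : int -> lmodType R).
Variable d : forall n : int, {linear I n -> I (n + 1)}.
Variable phi : {linear D -> I 0}.
Hypothesis d_complex : is_complex d.
Hypothesis phi_ker : forall y : I 0, d 0 y = 0 <-> exists b : D, phi b = y.

Lemma boundary_in_image (w : I (-1)) : exists del : D, phi del = d (-1) w.
Proof. by apply/phi_ker; exact: (@d_complex (-1) w). Qed.

Lemma lift_through_differential (E : lmodType R) (f : {linear E -> D}) :
  Hom_acyclic E d ->
  exists g : {linear E -> I (-1)}, forall v, d (-1) (g v) = phi (f v).
Proof.
move=> homE; have phif_lin : linear (fun v => phi (f v) : I (-1 + 1)).
  by move=> r u v; rewrite !linearP.
apply: (homE (-1) (linear_map phif_lin)) => v.
by apply/phi_ker; exists (f v).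
Qed.
End GorensteinLift.

Section Telescope.
Variables (E : lmodType R) (x : nat -> R) (e : nat -> {linear R^o -> E}).
Hypothesis e_vanish : forall n y, first_ideal x n y -> e n y = 0.

Definition in_union_ideal (y : R^o) : Prop := exists n, first_ideal x n y.

Lemma union_ideal0 : in_union_ideal 0.
Proof. by exists 0%N; apply: first_ideal0. Qed.

Lemma union_idealB y z : in_union_ideal y -> in_union_ideal z -> in_union_ideal (y - z).
Proof.
move=> [m ym] [n zn]; exists (maxn m n); apply: first_idealB.
  by apply: first_ideal_mono ym; apply: leq_maxl.
by apply: first_ideal_mono zn; apply: leq_maxr.
Qed.

Lemma union_idealZ r y : in_union_ideal y -> in_union_ideal (r *: y).
Proof. by move=> [n yn]; exists n; apply: first_idealM. Qed.

Definition union_ideal : submodule_pred R^o :=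
  SubmodulePred union_ideal0 union_idealB union_idealZ.

Definition telescope (T : lmodType R) (G : nat -> {linear E -> T}) K (y : R^o) : T :=
  \sum_(k < K) G k (e k y).

Lemma telescope_stable (T : lmodType R) (G : nat -> {linear E -> T}) N K y :
  first_ideal x N y -> (N <= K)%N -> telescope G K y = telescope G N y.
Proof.
move=> yN /subnKC <-; elim: (K - N)%N => [|t IHt]; first by rewrite addn0.
rewrite /telescope addnS big_ord_recr /= -/(telescope _ _ _) IHt.
by rewrite e_vanish ?linear0 ?addr0 //; apply: first_ideal_mono yN; apply: leq_addr.
Qed.

Lemma telescope_indep (T : lmodType R) (G : nat -> {linear E -> T}) M N y :
  first_ideal x M y -> first_ideal x N y -> telescope G M y = telescope G N y.
Proof.
move=> yM yN; rewrite -(telescope_stable G yM (leq_maxl M N)).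
exact: telescope_stable yN (leq_maxr M N).
Qed.

Lemma telescope_map (T : lmodType R) (G : nat -> {linear E -> T}) :
  exists F : {linear submodule union_ideal -> T},
    forall a K, first_ideal x K (val a) -> F a = telescope G K (val a).
Proof.
have bound (a : submodule union_ideal) : in_union_ideal (val a).
  exact: (elimT (submod_memP union_ideal (val a)) (valP a)).
pose F a := telescope G (sval (cid (bound a))) (val a).
have FE a K : first_ideal x K (val a) -> F a = telescope G K (val a).
  exact: telescope_indep (svalP (cid (bound a))).
have F_lin : linear F.
  move=> r a b; have [[Ka aK] [Kb bK]] := (bound a, bound b).
  have aK' := first_ideal_mono (leq_maxl Ka Kb) aK.
  have bK' := first_ideal_mono (leq_maxr Ka Kb) bK.
  rewrite (FE a _ aK') (FE b _ bK') (FE _ (maxn Ka Kb)); last first.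
    rewrite -[val (r *: a + b)]/(r * val a + val b) -[val b]opprK -[- val b]sub0r.
    apply: first_idealB; first exact: first_idealM.
    by apply: first_idealB => //; apply: first_ideal0.
  rewrite /telescope scaler_sumr -big_split; apply: eq_bigr => k _.
  by rewrite !linearP.
by exists (linear_map F_lin).
Qed.
End Telescope.

(* Lift the
   inclusions of the summands to degree -1 of a complete resolution,
   telescope them over the union of the I_n and extend the result h to R by
   injectivity; then d (h 1) is the image of some del supported on the first
   N summands, while x N *: del has N-th coordinate e N (x N) != 0. *)
Theorem direct_sum_not_Gorenstein_injective (E : lmodType R) (x : nat -> R)
    (e : nat -> {linear R^o -> E}) :
  injective_module E ->
  (forall n y, first_ideal x n y -> e n y = 0) -> (forall n, e n (x n) != 0) ->
  forall (D : lmodType R) (iota : forall n, {linear E -> D}),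
    is_direct_sum (M := fun=> E) iota -> ~ Gorenstein_injective D.
Proof.
move=> injE e_vanish e_x D iota dsD.
move=> [I [d [injI [[d_cx _] [[phi [phi_inj phi_ker]] homI]]]]].
have [G GP] :=
  choice (fun m => lift_through_differential phi_ker (iota m) (homI E injE)).
have [F FP] := telescope_map e_vanish G.
have [h hP] := injI (-1) _ _ _ F (@submod_incl_inj _ _ (union_ideal x)).
have [del delP] := boundary_in_image d_cx phi_ker (h 1).
have [N [m delE]] := dsD.1 del.
have xN_union : union_ideal x (x N) by exists N.+1; apply: first_ideal_last.
have xN_del : x N *: del = \sum_(k < N.+1) iota k (e k (x N)).
  apply: phi_inj; rewrite linearZ delP -!linearZ /=.
  have -> : x N *: (1 : R^o) = submod_incl _ (submod_of xN_union) by apply: mulr1.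
  rewrite hP (FP (submod_of xN_union) N.+1 (first_ideal_last x N)) !linear_sum.
  by apply: eq_bigr => k _; rewrite GP.
pose m' i := if (i < N)%N then x N *: m i else 0.
have delE' : x N *: del = \sum_(i < N.+1) iota i (m' i).
  rewrite big_ord_recr /m' /= ltnn linear0 addr0 delE scaler_sumr.
  by apply: eq_bigr => i _; rewrite ltn_ord linearZ.
have := direct_sum_coord (a := fun k => e k (x N)) dsD
  (etrans (esym xN_del) delE') (ltnSn N).
by rewrite /m' ltnn; apply/eqP.
Qed.
End KeyLemma.

Theorem mainTheorem7 (R : comPzRingType) :
  (forall (M : nat -> lmodType R) (D : lmodType R)
          (iota : forall n, {linear M n -> D}),
      is_direct_sum iota ->
      (forall n, Gorenstein_injective (M n)) ->
      Gorenstein_injective D) ->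
  noetherian_ring R.
Proof.
move=> sum_GI; apply: contrapT => /not_noetherian_chain [x x_notin].
have injE : injective_module (coinduced R unitC) := coinduced_injective unitC_divisible.
have /choice [chi chiP] : forall n, exists chi : R -> unitC,
    [/\ {morph chi : y z / y + z}, forall y, first_ideal x n y -> chi y = 0
      & chi (x n) != 0].
  move=> n; apply: separating_character unitC_divisible unitC_torsion _ (x_notin n).
  by split=> [|y z]; [apply: first_ideal0 | apply: first_idealB].
have chiD n : {morph chi n : y z / y + z} by case: (chiP n).
pose e n := @adjunct R unitC R^o (chi n) (chiD n).
apply: (@direct_sum_not_Gorenstein_injective R _ x e injE _ _ _ _ (direct_sumP _)).
- move=> n y y_In; apply: coinduced_eq => s; rewrite adjunctE.
  have [_ chi_In _] := chiP n.
  by rewrite (chi_In (s *: (y : R^o))) //; apply: (first_idealM s y_In).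
- move=> n; apply/eqP => /(congr1 (fun f => val f 1)); rewrite adjunctE scale1r.
  by case: (chiP n) => _ _ /eqP.
- exact: sum_GI (direct_sumP _) (fun=> injective_Gorenstein_injective injE).
Qed.
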